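(* Let $\mu>0$, $\beta_1,\beta_2,\gamma_1,\gamma_2>0$, $0<\sigma_{21}\le\sigma_{12}\le 1$, $\mathcal R_i=\beta_i/(\gamma_i+\mu)$, and suppose $(\mathcal R_1,\mathcal R_2)\in\Omega^\mu$. Let $S^*$ be the $S$-component of the unique feasible steady state of system (M) with $I_1^*>0$, $I_2^*>0$. Then, for $i=1,2$, $1-\mathcal R_iS^*>0$ and $A_i>0$, where $A_1=\mathcal R_1\gamma_2\sigma_{21}(1-S^* )-(\gamma_2+\mu)(1-\mathcal R_1S^* )$ and $A_2=\mathcal R_2\gamma_1\sigma_{12}(1-S^* )-(\gamma_1+\mu)(1-\mathcal R_2S^* )$.
   Context: System (M) is the two-strain epidemic model for $(S,I_1,I_2,J_1,J_2,R_1,R_2,R_3)$ (the letters $R_1,R_2,R_3$ denote compartments, while $\mathcal R_1,\mathcal R_2$ denote numbers): $S'=\mu-\beta_1(I_1+J_1)S-\beta_2(I_2+J_2)S-\mu S$, $I_1'=\beta_1S(I_1+J_1)-(\mu+\gamma_1)I_1$, $I_2'=\beta_2S(I_2+J_2)-(\mu+\gamma_2)I_2$, $J_1'=\beta_1\sigma_{21}R_2(I_1+J_1)-(\mu+\gamma_1)J_1$, $J_2'=\beta_2\sigma_{12}R_1(I_2+J_2)-(\mu+\gamma_2)J_2$, $R_1'=\gamma_1I_1-\beta_2\sigma_{12}(I_2+J_2)R_1-\mu R_1$, $R_2'=\gamma_2I_2-\beta_1\sigma_{21}(I_1+J_1)R_2-\mu R_2$, $R_3'=\gamma_1J_1+\gamma_2J_2-\mu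 R_3$. A steady state is a zero of the right-hand side; it is feasible if all components are nonnegative and sum to 1. For $\mu\ge 0$, $\Omega^\mu=\Omega^\mu_1\cap\Omega^\mu_2$ where, for $\{i,j\}=\{1,2\}$, $\Omega^\mu_i=\left\{(\mathcal R_1,\mathcal R_2):\ \mathcal R_i>1,\ \mathcal R_j>\dfrac{(\gamma_i+\mu)\mathcal R_i}{(1+\sigma_{ij}(\mathcal R_i-1))\gamma_i+\mu}\right\}$. (For such parameters a unique feasible steady state with $I_1^*>0,I_2^*>0$ exists.) *)

From Stdlib Require Import Reals Lra.
Open Scope R_scope.

Definition repnum (beta gamma mu : R) : R := beta / (gamma + mu).

Definition Omega_i (Ri Rj gi sij mu : R) : Prop :=
  Ri > 1 /\ Rj > (gi + mu) * Ri / ((1 + sij * (Ri - 1)) * gi + mu).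

Definition Omega (mu g1 g2 s12 s21 Rn1 Rn2 : R) : Prop :=
  Omega_i Rn1 Rn2 g1 s12 mu /\ Omega_i Rn2 Rn1 g2 s21 mu.

Definition steady_state (mu b1 b2 g1 g2 s12 s21 : R)
  (S I1 I2 J1 J2 R1 R2 R3 : R) : Prop :=
  mu - b1 * (I1 + J1) * S - b2 * (I2 + J2) * S - mu * S = 0 /\
  b1 * S * (I1 + J1) - (mu + g1) * I1 = 0 /\
  b2 * S * (I2 + J2) - (mu + g2) * I2 = 0 /\
  b1 * s21 * R2 * (I1 + J1) - (mu + g1) * J1 = 0 /\
  b2 * s12 * R1 * (I2 + J2) - (mu + g2) * J2 = 0 /\
  g1 * I1 - b2 * s12 * (I2 + J2) * R1 - mu * R1 = 0 /\
  g2 * I2 - b1 * s21 * (I1 + J1) * R2 - mu * R2 = 0 /\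
  g1 * J1 + g2 * J2 - mu * R3 = 0.

Definition feasible (S I1 I2 J1 J2 R1 R2 R3 : R) : Prop :=
  0 <= S /\ 0 <= I1 /\ 0 <= I2 /\ 0 <= J1 /\ 0 <= J2 /\
  0 <= R1 /\ 0 <= R2 /\ 0 <= R3 /\
  S + I1 + I2 + J1 + J2 + R1 + R2 + R3 = 1.

From Stdlib Require Import Reals Lra Psatz.
Open Scope R_scope.

(* Adding the two infection equations of a strain and cancelling its total
   prevalence [I + J > 0] gives [R_i (S + sigma_ji R_j) = 1], i.e.
   [1 - R_i S = R_i sigma_ji R_j]; hence both claims for strain [i] reduce to
   [R_j > 0] and [gamma_j (1 - S) > (gamma_j + mu) R_j], which the equation for
   the recovered compartment [R_j] and the population constraint provide. *)

Lemma one_sub_repnum_mul (mu b g s S I J Rj : R) :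
  0 < mu -> 0 < g -> 0 < I + J ->
  b * S * (I + J) - (mu + g) * I = 0 ->
  b * s * Rj * (I + J) - (mu + g) * J = 0 ->
  1 - repnum b g mu * S = repnum b g mu * s * Rj.
Proof.
  intros Hmu Hg HT EI EJ.
  assert (Hbalance : b * (S + s * Rj) = mu + g).
  { apply (Rmult_eq_reg_r (I + J)); nra. }
  unfold repnum, Rdiv.
  replace 1 with ((mu + g) * / (g + mu)) by (field; lra).
  rewrite <- Hbalance; ring.
Qed.

Lemma recovered_pos (mu g I Rc loss : R) :
  0 < mu -> 0 <= loss -> 0 < g -> 0 < I ->
  g * I - loss * Rc - mu * Rc = 0 -> 0 < Rc.
Proof. intros Hmu Hloss Hg HI E. nra. Qed.

Lemma recovered_margin (mu g S I Rc : R) :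
  0 < g -> mu * Rc <= g * I -> S + I + Rc < 1 ->
  0 < g * (1 - S) - (g + mu) * Rc.
Proof. intros Hg Hflow Hpop. nra. Qed.

Lemma strain_inequalities (mu b g s S I J g' I' R' : R) :
  0 < mu -> 0 < b -> 0 < g -> 0 < g' -> 0 < s ->
  0 < I -> 0 <= J -> 0 < I' -> S + I' + R' < 1 ->
  b * S * (I + J) - (mu + g) * I = 0 ->
  b * s * R' * (I + J) - (mu + g) * J = 0 ->
  g' * I' - b * s * (I + J) * R' - mu * R' = 0 ->
  0 < 1 - repnum b g mu * S /\
  0 < repnum b g mu * g' * s * (1 - S) - (g' + mu) * (1 - repnum b g mu * S).
Proof.
  intros Hmu Hb Hg Hg' Hs HI HJ HI' Hpop EI EJ ER.
  assert (Hrep : 0 < repnum b g mu) by (apply Rdiv_lt_0_compat; lra).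
  assert (Hloss : 0 <= b * s * (I + J)) by (apply Rmult_le_pos; nra).
  assert (HR' : 0 < R') by (apply (recovered_pos mu g' I' R' (b * s * (I + J))); lra).
  assert (Hmargin : 0 < g' * (1 - S) - (g' + mu) * R').
  { apply (recovered_margin mu g' S I' R'); nra. }
  rewrite (one_sub_repnum_mul mu b g s S I J R'); try lra.
  split.
  - apply Rmult_lt_0_compat; [apply Rmult_lt_0_compat|]; lra.
  - replace (repnum b g mu * g' * s * (1 - S) - (g' + mu) * (repnum b g mu * s * R'))
      with (repnum b g mu * s * (g' * (1 - S) - (g' + mu) * R')) by ring.
    apply Rmult_lt_0_compat; [apply Rmult_lt_0_compat|]; lra.
Qed.

Theorem lemma3p4 (mu b1 b2 g1 g2 s12 s21 : R)
  (S I1 I2 J1 J2 R1 R2 R3 : R) :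
  0 < mu -> 0 < b1 -> 0 < b2 -> 0 < g1 -> 0 < g2 ->
  0 < s21 -> s21 <= s12 -> s12 <= 1 ->
  Omega mu g1 g2 s12 s21 (repnum b1 g1 mu) (repnum b2 g2 mu) ->
  steady_state mu b1 b2 g1 g2 s12 s21 S I1 I2 J1 J2 R1 R2 R3 ->
  feasible S I1 I2 J1 J2 R1 R2 R3 ->
  0 < I1 -> 0 < I2 ->
  let Rn1 := repnum b1 g1 mu in
  let Rn2 := repnum b2 g2 mu in
  0 < 1 - Rn1 * S /\ 0 < 1 - Rn2 * S /\
  0 < Rn1 * g2 * s21 * (1 - S) - (g2 + mu) * (1 - Rn1 * S) /\
  0 < Rn2 * g1 * s12 * (1 - S) - (g1 + mu) * (1 - Rn2 * S).
Proof.
  intros Hmu Hb1 Hb2 Hg1 Hg2 Hs21 Hs Hs12 _ Hss Hfeas HI1 HI2 Rn1 Rn2.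
  destruct Hss as [_ [E1 [E2 [E3 [E4 [E5 [E6 _]]]]]]].
  destruct Hfeas as [HS [_ [_ [HJ1 [HJ2 [HR1 [HR2 [HR3 Hsum]]]]]]]].
  destruct (strain_inequalities mu b1 g1 s21 S I1 J1 g2 I2 R2)
    as [H1 A1]; try lra.
  destruct (strain_inequalities mu b2 g2 s12 S I2 J2 g1 I1 R1)
    as [H2 A2]; try lra.
  repeat split; assumption.
Qed.
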